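(* Under the hypotheses: $N\ge M$, $d_i>0$ for all $i$, $\mathbf{P}\in\mathbb{Z}_{\ge0}^N$ with $P_N>0$, $\mathbf{L}\in\mathbb{R}^{N\times M}$ full rank with non-negative entries and $L_{N,j}>0$ for all $j$, let $l$ be the Poisson log-likelihood and $\mathbf{T}$ the multiplicative map defined in the context. Then: (i) a point $\tilde{\boldsymbol\alpha}\ge 0$ is the (unique) maximizer of $l$ on the non-negative orthant if and only if it satisfies the KKT conditions $\tilde\alpha_j\,\partial_j l(\tilde{\boldsymbol\alpha})=0$ for all $j$ and $\partial_j l(\tilde{\boldsymbol\alpha})\le 0$ whenever $\tilde\alpha_j=0$; in particular the maximizer is a fixed point of $\mathbf{T}$; (ii) if $\boldsymbol\alpha$ has all components strictly positive, then $\mathbf{T}(\boldsymbol\alpha)$ has all components strictly positive; hence if $\boldsymbol\alpha^{(0)}>0$ componentwise, all iterates $\boldsymbol\alpha^{(n+1)}=\mathbf{T}(\boldsymbol\alpha^{(n)})$ are strictly positive; (iii) a strictly positive $\boldsymbol\alpha$ is a fixed point of $\mathbf{T}$ only if it is the maximizer of $l$ on the non-negative orthant.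
   Context: $l(\boldsymbol\alpha)=\sum_{i=1}^N\big(P_i\log d_i-(\mathbf{L}\boldsymbol\alpha)_iP_i-d_i e^{-(\mathbf{L}\boldsymbol\alpha)_i}-\log(P_i!)\big)$ for $\boldsymbol\alpha\ge0$, with gradient $\partial_j l(\boldsymbol\alpha)=\sum_i L_{i,j}\big(d_ie^{-(\mathbf{L}\boldsymbol\alpha)_i}-P_i\big)$. The map $\mathbf{T}:\mathbb{R}^M\to\mathbb{R}^M$ is $$\mathbf{T}(\boldsymbol\alpha)_j=\frac{\big(\mathbf{L}^T(\mathbf{d}\odot e^{-\mathbf{L}\boldsymbol\alpha})\big)_j}{(\mathbf{L}^T\mathbf{P})_j}\,\alpha_j,$$ where $\odot$ is the componentwise product and $e^{-\mathbf{L}\boldsymbol\alpha}$ is taken componentwise; the denominators are positive under the hypotheses. *)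

From Stdlib Require Import Reals Lra Lia Arith Factorial.
Open Scope R_scope.

(* Vectors are functions nat -> R; indices are 0-based:
   i ranges over 0..N-1, j over 0..M-1.  Matrix L : nat -> nat -> R, L i j. *)

Fixpoint sumR (n : nat) (f : nat -> R) : R :=
  match n with
  | O => 0
  | S k => sumR k f + f k
  end.

Definition Lmul (M : nat) (L : nat -> nat -> R) (alpha : nat -> R) (i : nat) : R :=
  sumR M (fun j => L i j * alpha j).

Definition loglik (N M : nat) (L : nat -> nat -> R) (d : nat -> R) (P : nat -> nat)
  (alpha : nat -> R) : R :=
  sumR N (fun i => INR (P i) * ln (d i) - Lmul M L alpha i * INR (P i)
                   - d i * exp (- Lmul M L alpha i) - ln (INR (fact (P i)))).

Definition grad (N M : nat) (L : nat -> nat -> R) (d : nat -> R) (P : nat -> nat)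
  (alpha : nat -> R) (j : nat) : R :=
  sumR N (fun i => L i j * (d i * exp (- Lmul M L alpha i) - INR (P i))).

Definition Tmap (N M : nat) (L : nat -> nat -> R) (d : nat -> R) (P : nat -> nat)
  (alpha : nat -> R) (j : nat) : R :=
  sumR N (fun i => L i j * (d i * exp (- Lmul M L alpha i)))
  / sumR N (fun i => L i j * INR (P i)) * alpha j.

Fixpoint Titer (N M : nat) (L : nat -> nat -> R) (d : nat -> R) (P : nat -> nat)
  (a0 : nat -> R) (n : nat) : nat -> R :=
  match n with
  | O => a0
  | S k => Tmap N M L d P (Titer N M L d P a0 k)
  end.

Definition full_col_rank (N M : nat) (L : nat -> nat -> R) : Prop :=
  forall x : nat -> R,
    (forall i, (i < N)%nat -> Lmul M L x i = 0) ->
    forall j, (j < M)%nat -> x j = 0.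

Definition nonneg_vec (M : nat) (alpha : nat -> R) : Prop :=
  forall j, (j < M)%nat -> 0 <= alpha j.

Definition pos_vec (M : nat) (alpha : nat -> R) : Prop :=
  forall j, (j < M)%nat -> 0 < alpha j.

Definition is_maximizer (N M : nat) (L : nat -> nat -> R) (d : nat -> R) (P : nat -> nat)
  (alpha : nat -> R) : Prop :=
  nonneg_vec M alpha /\
  forall beta, nonneg_vec M beta -> loglik N M L d P beta <= loglik N M L d P alpha.

Definition KKT (N M : nat) (L : nat -> nat -> R) (d : nat -> R) (P : nat -> nat)
  (alpha : nat -> R) : Prop :=
  forall j, (j < M)%nat ->
    alpha j * grad N M L d P alpha j = 0 /\
    (alpha j = 0 -> grad N M L d P alpha j <= 0).

Definition is_fixed_point (N M : nat) (L : nat -> nat -> R) (d : nat -> R) (P : nat -> nat)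
  (alpha : nat -> R) : Prop :=
  forall j, (j < M)%nat -> Tmap N M L d P alpha j = alpha j.

(* The log-likelihood is concave: each row contributes [u |-> p ln d - u p - d e^(-u) - c]
   applied to [u = (L alpha)_i], and the tangent-line bound [e^y >= e^x (1 + y - x)] gives
   [l(beta) - l(alpha) <= <grad l(alpha), beta - alpha>], strictly as soon as [L beta] and
   [L alpha] differ in some row.  Over the orthant the KKT conditions make the right-hand
   side non-positive, so KKT points are maximizers; conversely one-sided derivatives along
   the coordinate directions show that a maximizer satisfies KKT.  Two maximizers have the
   same likelihood, so the strict bound forces [L beta = L alpha], and full column rank
   gives [beta = alpha].  Finally [grad_j l = num_j - den_j] and [T(alpha)_j =
   num_j / den_j * alpha_j] with [num_j, den_j > 0] thanks to the last row of [L] and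
   [P_N > 0]: so [T] preserves positivity, and for positive [alpha] the fixed-point
   equation is exactly [grad l(alpha) = 0], i.e. KKT. *)
From Stdlib Require Import Reals Lra Lia.
From Coquelicot Require Import Coquelicot.
Open Scope R_scope.

Lemma sumR_ext n f g : (forall k, (k < n)%nat -> f k = g k) -> sumR n f = sumR n g.
Proof.
  induction n as [|n IH]; intros Hfg; simpl; [reflexivity|].
  rewrite IH, Hfg; auto; intros k Hk; apply Hfg; lia.
Qed.

Lemma sumR_le n f g : (forall k, (k < n)%nat -> f k <= g k) -> sumR n f <= sumR n g.
Proof.
  induction n as [|n IH]; intros Hfg; simpl; [lra|].
  assert (sumR n f <= sumR n g) by (apply IH; intros; apply Hfg; lia).
  specialize (Hfg n ltac:(lia)); lra.
Qed.

Lemma sumR_lt n f g k0 : (forall k, (k < n)%nat -> f k <= g k) ->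
  (k0 < n)%nat -> f k0 < g k0 -> sumR n f < sumR n g.
Proof.
  induction n as [|n IH]; intros Hfg Hk0 Hlt; simpl; [lia|].
  destruct (Nat.eq_dec k0 n) as [->|Hne].
  - assert (sumR n f <= sumR n g) by (apply sumR_le; intros; apply Hfg; lia). lra.
  - assert (sumR n f < sumR n g) by (apply IH; [intros; apply Hfg; lia|lia|exact Hlt]).
    specialize (Hfg n ltac:(lia)); lra.
Qed.

Lemma sumR_zero n : sumR n (fun _ => 0) = 0.
Proof. induction n as [|n IH]; simpl; [|rewrite IH]; lra. Qed.

Lemma sumR_pos n f k0 : (forall k, (k < n)%nat -> 0 <= f k) ->
  (k0 < n)%nat -> 0 < f k0 -> 0 < sumR n f.
Proof. intros. rewrite <- (sumR_zero n). apply (sumR_lt _ _ _ k0); auto. Qed.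

Lemma sumR_plus n f g : sumR n (fun k => f k + g k) = sumR n f + sumR n g.
Proof. induction n as [|n IH]; simpl; [|rewrite IH]; lra. Qed.

Lemma sumR_minus n f g : sumR n (fun k => f k - g k) = sumR n f - sumR n g.
Proof. induction n as [|n IH]; simpl; [|rewrite IH]; lra. Qed.

Lemma sumR_mull n c f : sumR n (fun k => c * f k) = c * sumR n f.
Proof. induction n as [|n IH]; simpl; [|rewrite IH]; lra. Qed.

Lemma sumR_mulr n c f : sumR n (fun k => f k * c) = sumR n f * c.
Proof. induction n as [|n IH]; simpl; [|rewrite IH]; lra. Qed.

Lemma sumR_swap n m f :
  sumR n (fun i => sumR m (fun j => f i j)) = sumR m (fun j => sumR n (fun i => f i j)).
Proof.
  induction n as [|n IH]; simpl; [now rewrite sumR_zero|].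
  now rewrite IH, <- sumR_plus.
Qed.

Lemma sumR_delta m g j : (j < m)%nat ->
  sumR m (fun k => g k * (if Nat.eq_dec k j then 1 else 0)) = g j.
Proof.
  induction m as [|m IH]; intros Hj; simpl; [lia|].
  destruct (Nat.eq_dec m j) as [->|Hne].
  - rewrite (sumR_ext _ _ (fun _ => 0)), sumR_zero; [lra|].
    intros k Hk; destruct (Nat.eq_dec k j); [lia|lra].
  - rewrite IH by lia; lra.
Qed.

Lemma exp_tangent_le x y : exp x * (1 + (y - x)) <= exp y.
Proof.
  replace y with (x + (y - x)) at 2 by ring; rewrite exp_plus.
  pose proof (exp_pos x); pose proof (exp_ineq1_le (y - x)); nra.
Qed.

Lemma exp_tangent_lt x y : x <> y -> exp x * (1 + (y - x)) < exp y.
Proof.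
  intros Hxy; replace y with (x + (y - x)) at 2 by ring; rewrite exp_plus.
  pose proof (exp_pos x); pose proof (exp_ineq1 (y - x) ltac:(lra)); nra.
Qed.

Lemma deriv_nonpos_of_right_max g l r : derivable_pt_lim g 0 l -> 0 < r ->
  (forall h, 0 < h < r -> g h <= g 0) -> l <= 0.
Proof.
  intros Hg Hr Hmax; destruct (Rle_dec l 0) as [|Hl]; auto; exfalso.
  destruct (Hg l ltac:(lra)) as [[del Hdel] Hquot]; simpl in Hquot.
  set (h := Rmin del r / 2).
  assert (Hh : 0 < h < del /\ h < r).
  { pose proof (Rmin_l del r); pose proof (Rmin_r del r).
    assert (0 < Rmin del r) by (apply Rmin_glb_lt; lra). unfold h; lra. }
  specialize (Hquot h ltac:(lra) ltac:(rewrite Rabs_pos_eq; lra)).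
  rewrite Rplus_0_l in Hquot; apply Rabs_def2 in Hquot.
  specialize (Hmax h ltac:(lra)).
  assert ((g h - g 0) / h <= 0).
  { unfold Rdiv; assert (0 < / h) by (apply Rinv_0_lt_compat; lra); nra. }
  lra.
Qed.

Lemma deriv_nonneg_of_left_max g l r : derivable_pt_lim g 0 l -> 0 < r ->
  (forall h, - r < h < 0 -> g h <= g 0) -> 0 <= l.
Proof.
  intros Hg Hr Hmax.
  enough (- l <= 0) by lra.
  apply (deriv_nonpos_of_right_max (mirr_fct g) _ r); auto.
  - apply derivable_pt_lim_mirr_fwd; rewrite Ropp_0, Ropp_involutive; exact Hg.
  - intros h Hh; unfold mirr_fct; rewrite Ropp_0; apply Hmax; lra.
Qed.

Lemma derivable_pt_lim_sumR n f df x :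
  (forall k, derivable_pt_lim (f k) x (df k)) ->
  derivable_pt_lim (fun t => sumR n (fun k => f k t)) x (sumR n df).
Proof.
  intros Hf; induction n as [|n IH]; simpl.
  - apply derivable_pt_lim_const.
  - exact (derivable_pt_lim_plus (fun t => sumR n (fun k => f k t)) (f n) _ _ _ IH (Hf n)).
Qed.

Definition poisson_term (p d c u : R) : R := p * ln d - u * p - d * exp (- u) - c.

Lemma poisson_term_tangent_le p d c u v : 0 < d ->
  poisson_term p d c v - poisson_term p d c u <= (v - u) * (d * exp (- u) - p).
Proof.
  intros Hd; unfold poisson_term; pose proof (exp_tangent_le (- u) (- v)); nra.
Qed.

Lemma poisson_term_tangent_lt p d c u v : 0 < d -> u <> v ->
  poisson_term p d c v - poisson_term p d c u < (v - u) * (d * exp (- u) - p).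
Proof.
  intros Hd Huv; unfold poisson_term.
  pose proof (exp_tangent_lt (- u) (- v) ltac:(lra)); nra.
Qed.

Lemma Lmul_sub M L a b i : Lmul M L b i - Lmul M L a i = Lmul M L (fun j => b j - a j) i.
Proof. unfold Lmul; rewrite <- sumR_minus; apply sumR_ext; intros; ring. Qed.

Definition upd (a : nat -> R) j t k := a k + t * (if Nat.eq_dec k j then 1 else 0).

Lemma Lmul_upd M L a j t i : (j < M)%nat -> Lmul M L (upd a j t) i = Lmul M L a i + t * L i j.
Proof.
  intros Hj; unfold Lmul, upd.
  rewrite (sumR_ext _ _ (fun k => L i k * a k + t * (L i k * (if Nat.eq_dec k j then 1 else 0))))
    by (intros; ring).
  now rewrite sumR_plus, sumR_mull, sumR_delta.
Qed.

Lemma upd_nonneg M a j h : nonneg_vec M a -> 0 <= a j + h -> nonneg_vec M (upd a j h).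
Proof.
  intros Ha Hh k Hk; unfold upd.
  destruct (Nat.eq_dec k j) as [->|]; [lra|]; specialize (Ha k Hk); lra.
Qed.

Section PoissonEM.

Variables (N M : nat) (L : nat -> nat -> R) (d : nat -> R) (P : nat -> nat).
Hypothesis hN : (0 < N)%nat.
Hypothesis hd : forall i, (i < N)%nat -> 0 < d i.
Hypothesis hPN : (0 < P (N - 1))%nat.
Hypothesis hLnn : forall i j, (i < N)%nat -> (j < M)%nat -> 0 <= L i j.
Hypothesis hLN : forall j, (j < M)%nat -> 0 < L (N - 1)%nat j.
Hypothesis hrank : full_col_rank N M L.

Notation l := (loglik N M L d P).
Notation gradl := (grad N M L d P).

Lemma grad_pairing a b :
  sumR N (fun i => (Lmul M L b i - Lmul M L a i) * (d i * exp (- Lmul M L a i) - INR (P i)))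
  = sumR M (fun j => gradl a j * (b j - a j)).
Proof.
  rewrite (sumR_ext _ _ (fun i => sumR M (fun j =>
             L i j * (b j - a j) * (d i * exp (- Lmul M L a i) - INR (P i))))).
  - rewrite sumR_swap; apply sumR_ext; intros j _.
    unfold grad; rewrite <- sumR_mulr; apply sumR_ext; intros; ring.
  - intros i _; rewrite Lmul_sub; unfold Lmul; now rewrite <- sumR_mulr.
Qed.

Lemma loglik_tangent_le a b : l b - l a <= sumR M (fun j => gradl a j * (b j - a j)).
Proof.
  rewrite <- grad_pairing; unfold loglik; rewrite <- sumR_minus.
  apply sumR_le; intros i Hi; apply poisson_term_tangent_le; auto.
Qed.

Lemma loglik_tangent_lt a b i0 : (i0 < N)%nat -> Lmul M L b i0 <> Lmul M L a i0 ->
  l b - l a < sumR M (fun j => gradl a j * (b j - a j)).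
Proof.
  intros Hi0 Hne; rewrite <- grad_pairing; unfold loglik; rewrite <- sumR_minus.
  apply (sumR_lt _ _ _ i0); auto.
  - intros i Hi; apply poisson_term_tangent_le; auto.
  - apply poisson_term_tangent_lt; auto.
Qed.

Lemma KKT_grad_pairing_nonpos a b : KKT N M L d P a -> nonneg_vec M b ->
  sumR M (fun j => gradl a j * (b j - a j)) <= 0.
Proof.
  intros HK Hb; rewrite <- (sumR_zero M); apply sumR_le; intros j Hj.
  destruct (HK j Hj) as [Hcompl Hbound]; specialize (Hb j Hj).
  destruct (Req_dec (a j) 0) as [E|E].
  - specialize (Hbound E); rewrite E; nra.
  - apply Rmult_integral in Hcompl as [|G0]; [contradiction|]; rewrite G0; lra.
Qed.

Lemma KKT_is_maximizer a : nonneg_vec M a -> KKT N M L d P a -> is_maximizer N M L d P a.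
Proof.
  intros Ha HK; split; auto; intros b Hb.
  pose proof (loglik_tangent_le a b); pose proof (KKT_grad_pairing_nonpos a b HK Hb); lra.
Qed.

Lemma loglik_upd_derivable a j : (j < M)%nat ->
  derivable_pt_lim (fun t => l (upd a j t)) 0 (gradl a j).
Proof.
  intros Hj; unfold loglik, grad.
  eapply derivable_pt_lim_ext.
  { intros t; symmetry; apply sumR_ext; intros i _; rewrite Lmul_upd by exact Hj; reflexivity. }
  apply derivable_pt_lim_sumR; intros i; apply is_derive_Reals.
  auto_derive; auto; rewrite Rmult_0_l, Rplus_0_r; ring.
Qed.

Lemma maximizer_KKT a : is_maximizer N M L d P a -> KKT N M L d P a.
Proof.
  intros [Ha Hmax] j Hj.
  assert (Hupd0 : l (upd a j 0) = l a).
  { unfold loglik; apply sumR_ext; intros i _; rewrite Lmul_upd by exact Hj.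
    now rewrite Rmult_0_l, Rplus_0_r. }
  assert (Hloc : forall h, 0 <= a j + h -> l (upd a j h) <= l (upd a j 0)).
  { intros h Hh; rewrite Hupd0; apply Hmax, upd_nonneg; auto. }
  assert (Hle : gradl a j <= 0).
  { apply (deriv_nonpos_of_right_max (fun t => l (upd a j t)) _ 1); [apply loglik_upd_derivable; auto|lra|].
    intros h Hh; apply Hloc; specialize (Ha j Hj); lra. }
  split; [|auto].
  destruct (Req_dec (a j) 0) as [E|E]; [rewrite E; ring|].
  assert (0 < a j) by (specialize (Ha j Hj); lra).
  assert (0 <= gradl a j).
  { apply (deriv_nonneg_of_left_max (fun t => l (upd a j t)) _ (a j)); [apply loglik_upd_derivable; auto|lra|].
    intros h Hh; apply Hloc; lra. }
  replace (gradl a j) with 0 by lra; ring.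
Qed.

Lemma maximizer_unique a b : is_maximizer N M L d P a -> is_maximizer N M L d P b ->
  forall j, (j < M)%nat -> a j = b j.
Proof.
  intros Ha Hb j Hj.
  pose proof (KKT_grad_pairing_nonpos a b (maximizer_KKT a Ha) (proj1 Hb)) as Hpair.
  assert (Heq : l a = l b).
  { destruct Ha as [Ha0 Ha], Hb as [Hb0 Hb]; specialize (Ha b Hb0); specialize (Hb a Ha0); lra. }
  assert (Hker : forall i, (i < N)%nat -> Lmul M L (fun k => b k - a k) i = 0).
  { intros i Hi; rewrite <- Lmul_sub.
    destruct (Req_dec (Lmul M L b i) (Lmul M L a i)) as [|Hne]; [lra|].
    pose proof (loglik_tangent_lt a b i Hi Hne); lra. }
  pose proof (hrank _ Hker j Hj) as Hj0; simpl in Hj0; lra.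
Qed.

Definition em_num a j := sumR N (fun i => L i j * (d i * exp (- Lmul M L a i))).
Definition em_den j := sumR N (fun i => L i j * INR (P i)).

Lemma grad_num_den a j : gradl a j = em_num a j - em_den j.
Proof. unfold grad, em_num, em_den; rewrite <- sumR_minus; apply sumR_ext; intros; ring. Qed.

Lemma Tmap_num_den a j : Tmap N M L d P a j = em_num a j / em_den j * a j.
Proof. reflexivity. Qed.

Lemma em_den_pos j : (j < M)%nat -> 0 < em_den j.
Proof.
  intros Hj; apply (sumR_pos _ _ (N - 1)); [|lia|].
  - intros i Hi; apply Rmult_le_pos; auto; apply pos_INR.
  - apply Rmult_lt_0_compat; auto; apply lt_0_INR; lia.
Qed.

Lemma em_num_pos a j : (j < M)%nat -> 0 < em_num a j.
Proof.
  intros Hj; apply (sumR_pos _ _ (N - 1)); [|lia|].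
  - intros i Hi; apply Rmult_le_pos; auto.
    apply Rmult_le_pos; [apply Rlt_le, hd; auto|apply Rlt_le, exp_pos].
  - apply Rmult_lt_0_compat; auto; apply Rmult_lt_0_compat; [apply hd; lia|apply exp_pos].
Qed.

Lemma Tmap_pos a : pos_vec M a -> pos_vec M (Tmap N M L d P a).
Proof.
  intros Ha j Hj; rewrite Tmap_num_den.
  pose proof (em_num_pos a j Hj); pose proof (em_den_pos j Hj).
  apply Rmult_lt_0_compat; auto; apply Rdiv_lt_0_compat; auto.
Qed.

Lemma Titer_pos a0 : pos_vec M a0 -> forall n, pos_vec M (Titer N M L d P a0 n).
Proof. intros Ha0 n; induction n as [|n IH]; simpl; auto using Tmap_pos. Qed.

Lemma KKT_fixed_point a : KKT N M L d P a -> is_fixed_point N M L d P a.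
Proof.
  intros HK j Hj; destruct (HK j Hj) as [Hcompl _].
  rewrite grad_num_den in Hcompl; rewrite Tmap_num_den.
  pose proof (em_den_pos j Hj).
  replace (em_num a j / em_den j * a j) with (a j * (em_num a j - em_den j) / em_den j + a j)
    by (field; lra).
  rewrite Hcompl; unfold Rdiv; ring.
Qed.

Lemma pos_fixed_point_KKT a : pos_vec M a -> is_fixed_point N M L d P a -> KKT N M L d P a.
Proof.
  intros Ha Hfix j Hj; specialize (Hfix j Hj); specialize (Ha j Hj).
  rewrite Tmap_num_den in Hfix.
  assert (Hgrad0 : gradl a j = 0).
  { pose proof (em_den_pos j Hj) as Hden; rewrite grad_num_den.
    assert (Hratio : em_num a j / em_den j = 1) by (apply Rmult_eq_reg_r with (a j); lra).
    unfold Rdiv in Hratio; apply Rmult_eq_reg_r with (/ em_den j).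
    - rewrite Rmult_minus_distr_r, Rinv_r; lra.
    - apply Rinv_neq_0_compat; lra. }
  rewrite Hgrad0; split; [ring|lra].
Qed.

End PoissonEM.

Theorem mainTheorem2
  (N M : nat) (L : nat -> nat -> R) (d : nat -> R) (P : nat -> nat)
  (hN : (0 < N)%nat) (hNM : (M <= N)%nat)
  (hd : forall i, (i < N)%nat -> 0 < d i)
  (hPN : (0 < P (N - 1))%nat)
  (hLnn : forall i j, (i < N)%nat -> (j < M)%nat -> 0 <= L i j)
  (hLN : forall j, (j < M)%nat -> 0 < L (N - 1)%nat j)
  (hrank : full_col_rank N M L) :
  (* (i) *)
  (forall a, nonneg_vec M a ->
     (is_maximizer N M L d P a <-> KKT N M L d P a)) /\
  (forall a b, is_maximizer N M L d P a -> is_maximizer N M L d P b ->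
     forall j, (j < M)%nat -> a j = b j) /\
  (forall a, is_maximizer N M L d P a -> is_fixed_point N M L d P a) /\
  (* (ii) *)
  (forall a, pos_vec M a -> pos_vec M (Tmap N M L d P a)) /\
  (forall a0, pos_vec M a0 -> forall n, pos_vec M (Titer N M L d P a0 n)) /\
  (* (iii) *)
  (forall a, pos_vec M a -> is_fixed_point N M L d P a -> is_maximizer N M L d P a).
Proof.
  split; [|split; [|split; [|split; [|split]]]].
  - intros a Ha; split; [apply maximizer_KKT|apply KKT_is_maximizer]; auto.
  - exact (maximizer_unique N M L d P hd hrank).
  - intros a Ha; apply (KKT_fixed_point N M L d P hN hPN hLnn hLN), maximizer_KKT; auto.
  - exact (Tmap_pos N M L d P hN hd hPN hLnn hLN).
  - exact (Titer_pos N M L d P hN hd hPN hLnn hLN).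
  - intros a Ha Hfix; apply KKT_is_maximizer; auto.
    + intros j Hj; apply Rlt_le, Ha, Hj.
    + apply (pos_fixed_point_KKT N M L d P hN hPN hLnn hLN); auto.
Qed.
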